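(* Let $E_3=(S^*,V_1^*,I_1^*,I_2^* )$ be an endemic equilibrium of the model with all components positive. Define the Jacobian entries (all partial derivatives of $F_1$ at $(S^*,I_1^* )$ and of $F_2$ at $(S^*,I_2^* )$): - $C_{11}=-\frac{\partial F_1}{\partial S}-\frac{\partial F_2}{\partial S}-\lambda$; - $C_{13}=-\frac{\partial F_1}{\partial I_1}$ and $C_{14}=-\frac{\partial F_2}{\partial I_2}$; - $C_{22}=-\mu-kI_2^*$ and $C_{24}=-kV_1^*$; - $C_{31}=\frac{\partial F_1}{\partial S}$ and $C_{33}=\frac{\partial F_1}{\partial I_1}-\alpha_1$; - $C_{41}=\frac{\partial F_2}{\partial S}$, $C_{42}=kI_2^*$ and $C_{44}=\frac{\partial F_2}{\partial I_2}+kV_1^*-\alpha_2$. Let - $c_1=-C_{44}-C_{33}-C_{22}-C_{11}$; - $c_2=-C_{41}C_{14}-C_{42}C_{24}+C_{44}C_{33}+C_{44}C_{22}+C_{44}C_{11}-C_{31}C_{13}+C_{33}C_{22}+C_{33}C_{11}+C_{22}C_{11}$; - $c_3=-rC_{42}C_{14}+C_{41}C_{14}C_{33}+C_{41}C_{14}C_{22}+C_{42}C_{24}C_{33}+C_{42}C_{24}C_{11}+C_{44}C_{31}C_{13}-C_{44}C_{33}C_{22}-C_{44}C_{33}C_{11}-C_{44}C_{22}C_{11}+C_{31}C_{13}C_{22}-C_{33}C_{22}C_{11}$; - $c_4=rC_{42}C_{14}C_{33}-C_{41}C_{14}C_{33}C_{22}+C_{42}C_{24}C_{31}C_{13}-C_{42}C_{24}C_{33}C_{11}-C_{44}C_{31}C_{13}C_{22}+C_{44}C_{33}C_{22}C_{11}$.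 If $c_1c_2-c_3>0$ and $c_1c_2c_3-c_3^2-c_1^2c_4>0$, then $E_3$ is locally asymptotically stable.
   Context: The model is $\dot S=\Lambda-F_1(S,I_1)-F_2(S,I_2)-\lambda S$, $\dot V_1=rS-(\mu+kI_2)V_1$, $\dot I_1=F_1(S,I_1)-\alpha_1I_1$, $\dot I_2=F_2(S,I_2)+kI_2V_1-\alpha_2I_2$ on $\mathbb{R}^4_+$. The constants $\Lambda,\mu,r,k,\gamma_1,\gamma_2>0$ and $v_1,v_2\ge0$; $\lambda=r+\mu$ and $\alpha_i=\gamma_i+v_i+\mu$. For $i=1,2$ the incidence functions satisfy: - (H1) $F_i(S,I_i)=I_if_i(S,I_i)$ with $F_i,f_i\in C^2(\mathbb{R}^2_+,\mathbb{R}_+)$ and $F_i(0,I_i)=F_i(S,0)=0$; - (H2) $\partial f_i/\partial S>0$ and $\partial f_i/\partial I_i\le0$; - (H3) $\lim_{I_i\to0^+}F_i(S,I_i)/I_i$ exists and is positive for $S>0$. *)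

From Stdlib Require Import Reals.
From Coquelicot Require Import Coquelicot.
Open Scope R_scope.

Definition D1 (F : R -> R -> R) (x y : R) : R := Derive (fun u => F u y) x.
Definition D2 (F : R -> R -> R) (x y : R) : R := Derive (fun v => F x v) y.

Definition C2_quadrant (F : R -> R -> R) : Prop :=
  forall x y, 0 <= x -> 0 <= y ->
    ex_derive (fun u => F u y) x /\ ex_derive (fun v => F x v) y /\
    ex_derive (fun u => D1 F u y) x /\ ex_derive (fun v => D1 F x v) y /\
    ex_derive (fun u => D2 F u y) x /\ ex_derive (fun v => D2 F x v) y /\
    continuity_2d_pt F x y /\
    continuity_2d_pt (D1 F) x y /\ continuity_2d_pt (D2 F) x y /\
    continuity_2d_pt (D1 (D1 F)) x y /\ continuity_2d_pt (D2 (D1 F)) x y /\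
    continuity_2d_pt (D1 (D2 F)) x y /\ continuity_2d_pt (D2 (D2 F)) x y.

Definition incidence_hyp (F f : R -> R -> R) : Prop :=
  (forall S I, 0 <= S -> 0 <= I -> F S I = I * f S I) /\
  C2_quadrant F /\ C2_quadrant f /\
  (forall S I, 0 <= S -> 0 <= I -> 0 <= F S I /\ 0 <= f S I) /\
  (forall I, 0 <= I -> F 0 I = 0) /\
  (forall S, 0 <= S -> F S 0 = 0) /\
  (forall S I, 0 <= S -> 0 <= I -> D1 f S I > 0 /\ D2 f S I <= 0) /\
  (forall S, 0 < S -> exists L, L > 0 /\
       filterlim (fun I => F S I / I) (at_right 0) (locally L)).

(** Right-hand side of the model; lam = r + mu, alpha_i = gamma_i + v_i + mu. *)
Definition rhsS Lam mu r (F1 F2 : R -> R -> R) S I1 I2 : R :=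
  Lam - F1 S I1 - F2 S I2 - (r + mu) * S.
Definition rhsV mu r k S V1 I2 : R := r * S - (mu + k * I2) * V1.
Definition rhsI1 mu g1 v1 (F1 : R -> R -> R) S I1 : R :=
  F1 S I1 - (g1 + v1 + mu) * I1.
Definition rhsI2 mu k g2 v2 (F2 : R -> R -> R) S V1 I2 : R :=
  F2 S I2 + k * I2 * V1 - (g2 + v2 + mu) * I2.

Definition is_solution Lam mu r k g1 g2 v1 v2 (F1 F2 : R -> R -> R)
    (S V1 I1 I2 : R -> R) : Prop :=
  forall t, 0 <= t ->
    is_derive S t (rhsS Lam mu r F1 F2 (S t) (I1 t) (I2 t)) /\
    is_derive V1 t (rhsV mu r k (S t) (V1 t) (I2 t)) /\
    is_derive I1 t (rhsI1 mu g1 v1 F1 (S t) (I1 t)) /\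
    is_derive I2 t (rhsI2 mu k g2 v2 F2 (S t) (V1 t) (I2 t)).

Definition dist4 (a b c d a' b' c' d' : R) : R :=
  sqrt ((a - a')^2 + (b - b')^2 + (c - c')^2 + (d - d')^2).

Definition locally_asymptotically_stable Lam mu r k g1 g2 v1 v2
    (F1 F2 : R -> R -> R) (Ss Vs I1s I2s : R) : Prop :=
  (forall eps, eps > 0 -> exists del, del > 0 /\
     forall S V1 I1 I2 : R -> R,
       is_solution Lam mu r k g1 g2 v1 v2 F1 F2 S V1 I1 I2 ->
       0 <= S 0 -> 0 <= V1 0 -> 0 <= I1 0 -> 0 <= I2 0 ->
       dist4 (S 0) (V1 0) (I1 0) (I2 0) Ss Vs I1s I2s < del ->
       forall t, 0 <= t -> dist4 (S t) (V1 t) (I1 t) (I2 t) Ss Vs I1s I2s < eps) /\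
  (exists del, del > 0 /\
     forall S V1 I1 I2 : R -> R,
       is_solution Lam mu r k g1 g2 v1 v2 F1 F2 S V1 I1 I2 ->
       0 <= S 0 -> 0 <= V1 0 -> 0 <= I1 0 -> 0 <= I2 0 ->
       dist4 (S 0) (V1 0) (I1 0) (I2 0) Ss Vs I1s I2s < del ->
       is_lim S p_infty Ss /\ is_lim V1 p_infty Vs /\
       is_lim I1 p_infty I1s /\ is_lim I2 p_infty I2s).

From Stdlib Require Import Reals Lra Psatz Classical List.
From Coquelicot Require Import Coquelicot.
Open Scope R_scope.

(* The two inequality hypotheses are two of the four Routh-Hurwitz conditions for the
   Jacobian [J] at E3; the other two, [c1 > 0] and [c4 > 0], follow from (H1)-(H2) and the
   equilibrium equations.  Being strict inequalities, they persist for [J + s I] with some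
   small [s > 0].  For a 4x4 matrix [M] satisfying them, the Schwarz canonical form gives a
   positive definite quadratic form [W], a weighted sum of squares of linear functionals,
   that is nonincreasing along [x' = M x]; along [x' = J x = (M - s I) x] it therefore decays
   like [exp (-2 s t)].  The nonlinear part of the vector field is quadratic near E3 (Taylor),
   so on a small ball [W' <= - (s/2) W], and a continuous-induction argument keeps every
   solution starting close enough inside that ball forever, giving exponential convergence. *)

Record vec4 := Vec4 { comp0 : R; comp1 : R; comp2 : R; comp3 : R }.

Record mat4 := Mat4 {
  m00 : R; m01 : R; m02 : R; m03 : R;
  m10 : R; m11 : R; m12 : R; m13 : R;
  m20 : R; m21 : R; m22 : R; m23 : R;
  m30 : R; m31 : R; m32 : R; m33 : R }.

Definition vadd (x y : vec4) : vec4 :=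
  Vec4 (comp0 x + comp0 y) (comp1 x + comp1 y) (comp2 x + comp2 y) (comp3 x + comp3 y).
Definition vsub (x y : vec4) : vec4 :=
  Vec4 (comp0 x - comp0 y) (comp1 x - comp1 y) (comp2 x - comp2 y) (comp3 x - comp3 y).
Definition vscale (c : R) (x : vec4) : vec4 :=
  Vec4 (c * comp0 x) (c * comp1 x) (c * comp2 x) (c * comp3 x).
Definition dot (x y : vec4) : R :=
  comp0 x * comp0 y + comp1 x * comp1 y + comp2 x * comp2 y + comp3 x * comp3 y.
Definition sqnorm (x : vec4) : R :=
  comp0 x ^ 2 + comp1 x ^ 2 + comp2 x ^ 2 + comp3 x ^ 2.
Definition basis4 : list vec4 :=
  Vec4 1 0 0 0 :: Vec4 0 1 0 0 :: Vec4 0 0 1 0 :: Vec4 0 0 0 1 :: nil.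

Definition mxv (M : mat4) (x : vec4) : vec4 :=
  Vec4 (m00 M * comp0 x + m01 M * comp1 x + m02 M * comp2 x + m03 M * comp3 x)
       (m10 M * comp0 x + m11 M * comp1 x + m12 M * comp2 x + m13 M * comp3 x)
       (m20 M * comp0 x + m21 M * comp1 x + m22 M * comp2 x + m23 M * comp3 x)
       (m30 M * comp0 x + m31 M * comp1 x + m32 M * comp2 x + m33 M * comp3 x).
Definition vxm (w : vec4) (M : mat4) : vec4 :=
  Vec4 (comp0 w * m00 M + comp1 w * m10 M + comp2 w * m20 M + comp3 w * m30 M)
       (comp0 w * m01 M + comp1 w * m11 M + comp2 w * m21 M + comp3 w * m31 M)
       (comp0 w * m02 M + comp1 w * m12 M + comp2 w * m22 M + comp3 w * m32 M)
       (comp0 w * m03 M + comp1 w * m13 M + comp2 w * m23 M + comp3 w * m33 M).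
Definition mx_shift (M : mat4) (s : R) : mat4 :=
  Mat4 (m00 M + s) (m01 M) (m02 M) (m03 M)
       (m10 M) (m11 M + s) (m12 M) (m13 M)
       (m20 M) (m21 M) (m22 M + s) (m23 M)
       (m30 M) (m31 M) (m32 M) (m33 M + s).

Lemma vec4_eq (x y : vec4) :
  comp0 x = comp0 y -> comp1 x = comp1 y -> comp2 x = comp2 y -> comp3 x = comp3 y -> x = y.
Proof. destruct x, y; simpl; intros; subst; reflexivity. Qed.

Lemma dot_vaddr w x y : dot w (vadd x y) = dot w x + dot w y.
Proof. unfold dot, vadd; simpl; ring. Qed.

Lemma dot_vaddl w w' x : dot (vadd w w') x = dot w x + dot w' x.
Proof. unfold dot, vadd; simpl; ring. Qed.

Lemma dot_vscaler w c x : dot w (vscale c x) = c * dot w x.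
Proof. unfold dot, vscale; simpl; ring. Qed.

Lemma dot_vscalel c w x : dot (vscale c w) x = c * dot w x.
Proof. unfold dot, vscale; simpl; ring. Qed.

Lemma dot_vxm w M x : dot (vxm w M) x = dot w (mxv M x).
Proof. unfold dot, vxm, mxv; simpl; ring. Qed.

Lemma sqnorm_ge0 x : 0 <= sqnorm x.
Proof. unfold sqnorm; nra. Qed.

Lemma cauchy_schwarz4 u x : dot u x ^ 2 <= sqnorm u * sqnorm x.
Proof.
  destruct u as [u0 u1 u2 u3], x as [x0 x1 x2 x3]; unfold dot, sqnorm; simpl.
  assert (Lagrange : (u0^2+u1^2+u2^2+u3^2)*(x0^2+x1^2+x2^2+x3^2) - (u0*x0+u1*x1+u2*x2+u3*x3)^2
    = (u0*x1-u1*x0)^2 + (u0*x2-u2*x0)^2 + (u0*x3-u3*x0)^2 + (u1*x2-u2*x1)^2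
      + (u1*x3-u3*x1)^2 + (u2*x3-u3*x2)^2) by ring.
  assert (0 <= (u0*x1-u1*x0)^2 + (u0*x2-u2*x0)^2 + (u0*x3-u3*x0)^2 + (u1*x2-u2*x1)^2
      + (u1*x3-u3*x1)^2 + (u2*x3-u3*x2)^2) by (repeat apply Rplus_le_le_0_compat; apply pow2_ge_0).
  lra.
Qed.

Definition nonneg_weights (L : list (prod R vec4)) : Prop := List.Forall (fun gu => 0 <= fst gu) L.

Fixpoint quad_form (L : list (prod R vec4)) (x : vec4) : R :=
  match L with
  | nil => 0
  | (g, u) :: L' => g * dot u x ^ 2 + quad_form L' x
  end.

Fixpoint bilin_form (L : list (prod R vec4)) (x y : vec4) : R :=
  match L with
  | nil => 0
  | (g, u) :: L' => g * dot u x * dot u y + bilin_form L' x y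
  end.

Fixpoint quad_form_bound (L : list (prod R vec4)) : R :=
  match L with
  | nil => 0
  | (g, u) :: L' => g * sqnorm u + quad_form_bound L'
  end.

Lemma quad_form_app L L' x : quad_form (L ++ L') x = quad_form L x + quad_form L' x.
Proof. induction L as [|[g u] L IH]; simpl; [ring | rewrite IH; ring]. Qed.

Lemma bilin_form_app L L' x y : bilin_form (L ++ L') x y = bilin_form L x y + bilin_form L' x y.
Proof. induction L as [|[g u] L IH]; simpl; [ring | rewrite IH; ring]. Qed.

Lemma bilin_form_diag L x : bilin_form L x x = quad_form L x.
Proof. induction L as [|[g u] L IH]; simpl; [ring | rewrite IH; ring]. Qed.

Lemma bilin_form_vaddr L x y z : bilin_form L x (vadd y z) = bilin_form L x y + bilin_form L x z.
Proof. induction L as [|[g u] L IH]; simpl; [ring | rewrite IH, dot_vaddr; ring]. Qed.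

Lemma bilin_form_vscaler L x c y : bilin_form L x (vscale c y) = c * bilin_form L x y.
Proof. induction L as [|[g u] L IH]; simpl; [ring | rewrite IH, dot_vscaler; ring]. Qed.

Lemma quad_form_le_bound L x : nonneg_weights L -> quad_form L x <= quad_form_bound L * sqnorm x.
Proof.
  induction 1 as [|[g u] L Hg _ IH]; simpl in *; [lra|].
  pose proof (cauchy_schwarz4 u x); nra.
Qed.

Lemma bilin_form_le_amgm L x y t : nonneg_weights L -> 0 < t ->
  2 * bilin_form L x y <= t * quad_form L x + quad_form L y / t.
Proof.
  intros HL Ht; induction HL as [|[g u] L Hg _ IH]; simpl in *.
  - unfold Rdiv; lra.
  - assert (E : t * (g * dot u x ^ 2) + g * dot u y ^ 2 / t - 2 * (g * dot u x * dot u y)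
              = g * (t * dot u x - dot u y) ^ 2 / t) by (field; lra).
    assert (0 <= g * (t * dot u x - dot u y) ^ 2 / t).
    { apply Rdiv_le_0_compat; [apply Rmult_le_pos; [lra | apply pow2_ge_0] | exact Ht]. }
    assert (Ediv : (g * dot u y ^ 2 + quad_form L y) / t = g * dot u y ^ 2 / t + quad_form L y / t)
      by (field; lra).
    lra.
Qed.

Definition is_derive4 (e : R -> vec4) (t : R) (v : vec4) : Prop :=
  is_derive (fun s => comp0 (e s)) t (comp0 v) /\ is_derive (fun s => comp1 (e s)) t (comp1 v) /\
  is_derive (fun s => comp2 (e s)) t (comp2 v) /\ is_derive (fun s => comp3 (e s)) t (comp3 v).

Lemma is_derive_dot u e t v : is_derive4 e t v -> is_derive (fun s => dot u (e s)) t (dot u v).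
Proof.
  intros (H0 & H1 & H2 & H3); unfold dot.
  repeat apply (is_derive_plus (V := R_NormedModule)); apply is_derive_scal; assumption.
Qed.

Lemma is_derive_quad_form L e t v : is_derive4 e t v ->
  is_derive (fun s => quad_form L (e s)) t (2 * bilin_form L (e t) v).
Proof.
  intros He; induction L as [|[g u] L IH]; cbn [quad_form bilin_form].
  - rewrite Rmult_0_r; exact (is_derive_const 0 t).
  - replace (2 * (g * dot u (e t) * dot u v + bilin_form L (e t) v))
      with (g * (INR 2 * dot u v * dot u (e t) ^ 1) + 2 * bilin_form L (e t) v) by (simpl; ring).
    apply (is_derive_plus (V := R_NormedModule)); [|exact IH].
    apply is_derive_scal, is_derive_pow, is_derive_dot, He.
Qed.

Definition minor2 (a b c d : R) : R := a * d - b * c.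
Definition minor3 (a b c d e f g h i : R) : R :=
  a * minor2 e f h i - b * minor2 d f g i + c * minor2 d e g h.

(* [det (X I - M) = X^4 + char_coef1 M X^3 + char_coef2 M X^2 + char_coef3 M X + char_coef4 M]. *)
Definition char_coef1 (M : mat4) : R := - (m00 M + m11 M + m22 M + m33 M).
Definition char_coef2 (M : mat4) : R :=
  minor2 (m00 M) (m01 M) (m10 M) (m11 M) + minor2 (m00 M) (m02 M) (m20 M) (m22 M)
  + minor2 (m00 M) (m03 M) (m30 M) (m33 M) + minor2 (m11 M) (m12 M) (m21 M) (m22 M)
  + minor2 (m11 M) (m13 M) (m31 M) (m33 M) + minor2 (m22 M) (m23 M) (m32 M) (m33 M).
Definition char_coef3 (M : mat4) : R := - (
    minor3 (m00 M) (m01 M) (m02 M) (m10 M) (m11 M) (m12 M) (m20 M) (m21 M) (m22 M)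
  + minor3 (m00 M) (m01 M) (m03 M) (m10 M) (m11 M) (m13 M) (m30 M) (m31 M) (m33 M)
  + minor3 (m00 M) (m02 M) (m03 M) (m20 M) (m22 M) (m23 M) (m30 M) (m32 M) (m33 M)
  + minor3 (m11 M) (m12 M) (m13 M) (m21 M) (m22 M) (m23 M) (m31 M) (m32 M) (m33 M)).
Definition char_coef4 (M : mat4) : R :=
    m00 M * minor3 (m11 M) (m12 M) (m13 M) (m21 M) (m22 M) (m23 M) (m31 M) (m32 M) (m33 M)
  - m01 M * minor3 (m10 M) (m12 M) (m13 M) (m20 M) (m22 M) (m23 M) (m30 M) (m32 M) (m33 M)
  + m02 M * minor3 (m10 M) (m11 M) (m13 M) (m20 M) (m21 M) (m23 M) (m30 M) (m31 M) (m33 M)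
  - m03 M * minor3 (m10 M) (m11 M) (m12 M) (m20 M) (m21 M) (m22 M) (m30 M) (m31 M) (m32 M).

Definition vxm_pow (w : vec4) (M : mat4) (n : nat) : vec4 := Nat.iter n (fun u => vxm u M) w.

Lemma cayley_hamilton4 M w x :
  dot (vxm_pow w M 4) x =
  - (char_coef1 M * dot (vxm_pow w M 3) x + char_coef2 M * dot (vxm_pow w M 2) x
     + char_coef3 M * dot (vxm_pow w M 1) x + char_coef4 M * dot w x).
Proof.
  destruct M, w, x; unfold vxm_pow, dot, vxm, char_coef1, char_coef2, char_coef3, char_coef4,
    minor3, minor2; simpl; ring.
Qed.

Lemma char_coefs_shift M s :
  let k1 := char_coef1 M in let k2 := char_coef2 M in
  let k3 := char_coef3 M in let k4 := char_coef4 M in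
  char_coef1 (mx_shift M s) = k1 - 4 * s /\
  char_coef2 (mx_shift M s) = k2 - 3 * k1 * s + 6 * s ^ 2 /\
  char_coef3 (mx_shift M s) = k3 - 2 * k2 * s + 3 * k1 * s ^ 2 - 4 * s ^ 3 /\
  char_coef4 (mx_shift M s) = k4 - k3 * s + k2 * s ^ 2 - k1 * s ^ 3 + s ^ 4.
Proof.
  intros k1 k2 k3 k4; unfold k1, k2, k3, k4.
  destruct M; unfold mx_shift, char_coef1, char_coef2, char_coef3, char_coef4, minor3, minor2;
    simpl; repeat split; ring.
Qed.

Definition routh_hurwitz4 (M : mat4) : Prop :=
  0 < char_coef1 M /\
  0 < char_coef1 M * char_coef2 M - char_coef3 M /\
  0 < char_coef3 M * (char_coef1 M * char_coef2 M - char_coef3 M)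
      - char_coef1 M ^ 2 * char_coef4 M /\
  0 < char_coef4 M.

Definition hurwitz_b3 (M : mat4) : R := (char_coef1 M * char_coef2 M - char_coef3 M) / char_coef1 M.
Definition hurwitz_b1 (M : mat4) : R := char_coef4 M / hurwitz_b3 M.
Definition hurwitz_q (M : mat4) : R := char_coef3 M / char_coef1 M.
Definition hurwitz_b2 (M : mat4) : R := hurwitz_q M - hurwitz_b1 M.

Lemma hurwitz_weights_pos M : routh_hurwitz4 M ->
  0 < hurwitz_b1 M /\ 0 < hurwitz_b2 M /\ 0 < hurwitz_b3 M.
Proof.
  intros (H1 & H2 & H3 & H4).
  assert (Hb3 : 0 < hurwitz_b3 M) by (apply Rdiv_lt_0_compat; lra).
  assert (Hb1 : 0 < hurwitz_b1 M) by (apply Rdiv_lt_0_compat; lra).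
  split; [exact Hb1 | split; [| exact Hb3]].
  unfold hurwitz_b2, hurwitz_q, hurwitz_b1, hurwitz_b3.
  replace (char_coef3 M / char_coef1 M - char_coef4 M /
             ((char_coef1 M * char_coef2 M - char_coef3 M) / char_coef1 M))
    with ((char_coef3 M * (char_coef1 M * char_coef2 M - char_coef3 M)
           - char_coef1 M ^ 2 * char_coef4 M)
          / (char_coef1 M * (char_coef1 M * char_coef2 M - char_coef3 M))) by (field; lra).
  apply Rdiv_lt_0_compat; [lra | apply Rmult_lt_0_compat; lra].
Qed.

(* Along [x' = M x] the functionals [y_j = <w M^j, x>] satisfy [y_j' = y_(j+1)], and
   Cayley-Hamilton closes the chain at [y_4].  The weights [b_i, q] are those of the
   Schwarz canonical form of the companion matrix, for which the quadratic form
   [b1 b2 b3 y0^2 + b2 b3 y1^2 + b3 (y2 + b1 y0)^2 + (y3 + q y1)^2]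
   has derivative [-2 d1 (y3 + q y1)^2]. *)
Lemma hurwitz_chain_identity d1 d2 d3 d4 y0 y1 y2 y3 y4 :
  d1 <> 0 -> d1 * d2 - d3 <> 0 ->
  y4 = - (d1 * y3 + d2 * y2 + d3 * y1 + d4 * y0) ->
  let b3 := (d1 * d2 - d3) / d1 in
  let b1 := d4 / b3 in
  let q := d3 / d1 in
  let b2 := q - b1 in
  b1 * b2 * b3 * y0 * y1 + b2 * b3 * y1 * y2 + b3 * (y2 + b1 * y0) * (y3 + b1 * y1)
  + 1 * (y3 + q * y1) * (y4 + q * y2) = - d1 * (y3 + q * y1) ^ 2.
Proof.
  intros Hd1 Hd2 Hy4 b3 b1 q b2; subst y4; unfold b2, b1, q, b3; field; auto.
Qed.

Definition lyap_terms (M : mat4) (w : vec4) : list (prod R vec4) :=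
  (hurwitz_b1 M * hurwitz_b2 M * hurwitz_b3 M, w)
  :: (hurwitz_b2 M * hurwitz_b3 M, vxm_pow w M 1)
  :: (hurwitz_b3 M, vadd (vxm_pow w M 2) (vscale (hurwitz_b1 M) w))
  :: (1, vadd (vxm_pow w M 3) (vscale (hurwitz_q M) (vxm_pow w M 1)))
  :: nil.

Definition lyap_form (M : mat4) : list (prod R vec4) := flat_map (lyap_terms M) basis4.

Lemma lyap_form_nonneg M : routh_hurwitz4 M -> nonneg_weights (lyap_form M).
Proof.
  intros HM; destruct (hurwitz_weights_pos M HM) as (Hb1 & Hb2 & Hb3).
  assert (0 <= hurwitz_b2 M * hurwitz_b3 M) by (apply Rmult_le_pos; lra).
  assert (0 <= hurwitz_b1 M * hurwitz_b2 M * hurwitz_b3 M)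
    by (apply Rmult_le_pos; [apply Rmult_le_pos|]; lra).
  apply Forall_flat_map, Forall_forall; intros w _.
  repeat first [apply List.Forall_nil | apply List.Forall_cons | simpl; lra].
Qed.

Lemma bilin_form_lyap_terms_mxv M w x : routh_hurwitz4 M ->
  bilin_form (lyap_terms M w) x (mxv M x)
  = - char_coef1 M * (dot (vxm_pow w M 3) x + hurwitz_q M * dot (vxm_pow w M 1) x) ^ 2.
Proof.
  intros (H1 & H2 & _).
  pose proof (cayley_hamilton4 M w x) as CH.
  pose proof (hurwitz_chain_identity _ _ _ _ _ _ _ _ _
    (Rgt_not_eq _ _ H1) (Rgt_not_eq _ _ H2) CH) as Chain.
  unfold lyap_terms; cbn [bilin_form].
  rewrite !dot_vaddl, !dot_vscalel, <- !dot_vxm.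
  unfold hurwitz_b2, hurwitz_b1, hurwitz_q, hurwitz_b3; simpl in Chain |- *; lra.
Qed.

Lemma bilin_form_lyap_form_mxv_le0 M x : routh_hurwitz4 M ->
  bilin_form (lyap_form M) x (mxv M x) <= 0.
Proof.
  intros HM; unfold lyap_form; generalize basis4 as ws.
  induction ws as [|w ws IH]; cbn [flat_map].
  - simpl; lra.
  - rewrite bilin_form_app, (bilin_form_lyap_terms_mxv M w x HM).
    pose proof (pow2_ge_0 (dot (vxm_pow w M 3) x + hurwitz_q M * dot (vxm_pow w M 1) x)).
    destruct HM as [H1 _]; nra.
Qed.

Definition lyap_coercivity (M : mat4) : R := hurwitz_b1 M * hurwitz_b2 M * hurwitz_b3 M.

Lemma lyap_coercivity_pos M : routh_hurwitz4 M -> 0 < lyap_coercivity M.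
Proof.
  intros HM; destruct (hurwitz_weights_pos M HM) as (Hb1 & Hb2 & Hb3).
  apply Rmult_lt_0_compat; [apply Rmult_lt_0_compat|]; assumption.
Qed.

Lemma lyap_form_ge M x : routh_hurwitz4 M ->
  lyap_coercivity M * sqnorm x <= quad_form (lyap_form M) x.
Proof.
  intros HM; destruct (hurwitz_weights_pos M HM) as (Hb1 & Hb2 & Hb3).
  assert (Hterms : forall w, lyap_coercivity M * dot w x ^ 2 <= quad_form (lyap_terms M w) x).
  { intros w; unfold lyap_terms, lyap_coercivity; cbn [quad_form].
    assert (0 <= hurwitz_b2 M * hurwitz_b3 M * dot (vxm_pow w M 1) x ^ 2)
      by (apply Rmult_le_pos; [apply Rmult_le_pos; lra | apply pow2_ge_0]).
    assert (0 <= hurwitz_b3 M * dot (vadd (vxm_pow w M 2) (vscale (hurwitz_b1 M) w)) x ^ 2)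
      by (apply Rmult_le_pos; [lra | apply pow2_ge_0]).
    pose proof (pow2_ge_0 (dot (vadd (vxm_pow w M 3) (vscale (hurwitz_q M) (vxm_pow w M 1))) x)).
    lra. }
  assert (Ebasis : sqnorm x = dot (Vec4 1 0 0 0) x ^ 2 + dot (Vec4 0 1 0 0) x ^ 2
                              + dot (Vec4 0 0 1 0) x ^ 2 + dot (Vec4 0 0 0 1) x ^ 2)
    by (unfold sqnorm, dot; simpl; ring).
  unfold lyap_form, basis4; cbn [flat_map]; rewrite !quad_form_app; change (quad_form nil x) with 0.
  pose proof (Hterms (Vec4 1 0 0 0)); pose proof (Hterms (Vec4 0 1 0 0)).
  pose proof (Hterms (Vec4 0 0 1 0)); pose proof (Hterms (Vec4 0 0 0 1)).
  rewrite Ebasis, !Rmult_plus_distr_l; lra.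
Qed.

Lemma mxv_eq_shift M s x : mxv M x = vadd (mxv (mx_shift M s) x) (vscale (- s) x).
Proof. apply vec4_eq; unfold mxv, mx_shift, vadd, vscale; simpl; ring. Qed.

Lemma lyap_form_dissipation J s x rem : 0 < s -> routh_hurwitz4 (mx_shift J s) ->
  let L := lyap_form (mx_shift J s) in
  2 * bilin_form L x (vadd (mxv J x) rem) <= - s * quad_form L x + quad_form L rem / s.
Proof.
  intros Hs HM L.
  rewrite (mxv_eq_shift J s), !bilin_form_vaddr, bilin_form_vscaler, bilin_form_diag.
  pose proof (bilin_form_lyap_form_mxv_le0 _ x HM) as Hneg; fold L in Hneg.
  pose proof (bilin_form_le_amgm L x rem s (lyap_form_nonneg _ HM) Hs).
  lra.
Qed.

Lemma exp_decay_on_segment (phi phi' : R -> R) sig t : 0 <= t ->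
  (forall u, 0 <= u <= t -> is_derive phi u (phi' u)) ->
  (forall u, 0 < u < t -> phi' u <= - sig * phi u) ->
  phi t * exp (sig * t) <= phi 0.
Proof.
  intros Ht Hd Hdiss.
  destruct (Req_dec t 0) as [->|Ht0]; [rewrite Rmult_0_r, exp_0; lra|].
  set (g' := fun u => phi' u * exp (sig * u) + phi u * (sig * exp (sig * u))).
  assert (Hg : forall u, 0 <= u <= t -> derivable_pt_lim (fun v => phi v * exp (sig * v)) u (g' u)).
  { intros u Hu; apply is_derive_Reals; unfold g'.
    replace (sig * exp (sig * u)) with (sig * 1 * exp (sig * u)) by ring.
    apply (is_derive_mult phi (fun v => exp (sig * v))); [apply Hd; lra | | apply Rmult_comm].
    auto_derive; [exact I | ring]. }
  destruct (MVT_cor2 _ g' 0 t ltac:(lra) Hg) as [c [Hmvt Hc]].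
  assert (g' c <= 0).
  { unfold g'; specialize (Hdiss c Hc); pose proof (exp_pos (sig * c)); nra. }
  rewrite Rmult_0_r, exp_0, Rmult_1_r in Hmvt; nra.
Qed.

(* Continuous induction, via the supremum of the initial segments on which [phi < c]. *)
Lemma continuous_barrier (phi : R -> R) c t1 : 0 <= t1 ->
  (forall u, 0 <= u <= t1 -> continuity_pt phi u) ->
  (forall s, 0 <= s <= t1 -> (forall u, 0 <= u < s -> phi u < c) -> phi s < c) ->
  forall u, 0 <= u <= t1 -> phi u < c.
Proof.
  intros Ht1 Hcont Hstep.
  set (E := fun s => 0 <= s <= t1 /\ forall u, 0 <= u <= s -> phi u < c).
  assert (HE0 : E 0).
  { split; [lra|]; intros u Hu; replace u with 0 by lra.
    apply Hstep; [lra | intros; lra]. }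
  destruct (completeness E (ex_intro _ t1 (fun s Es => proj2 (proj1 Es))) (ex_intro _ 0 HE0))
    as [ss [Hub Hlub]].
  assert (Hss : 0 <= ss <= t1) by (split; [apply Hub, HE0 | apply Hlub; intros s Es; apply Es]).
  assert (Hbelow : forall u, 0 <= u < ss -> phi u < c).
  { intros u Hu; apply NNPP; intros Hnot.
    assert (ss <= u); [|lra].
    apply Hlub; intros s [Hs Hphi].
    destruct (Rle_dec s u) as [|Hsu]; [lra|].
    exfalso; apply Hnot, Hphi; lra. }
  assert (Hss_lt : phi ss < c) by (apply Hstep; assumption).
  assert (Hss_t1 : ss = t1).
  { apply NNPP; intros Hne.
    destruct (proj1 (continuity_pt_locally phi ss) (Hcont ss Hss)
                (mkposreal (c - phi ss) ltac:(lra))) as [eta Heta].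
    set (s' := Rmin (ss + eta / 2) t1).
    assert (Hs' : ss < s' <= t1).
    { pose proof (cond_pos eta); unfold s'; split; [apply Rmin_case; lra | apply Rmin_r]. }
    assert (E s').
    { split; [lra|]; intros u Hu.
      destruct (Rlt_le_dec u ss); [apply Hbelow; lra|].
      assert (Hball : ball ss eta u).
      { assert (u <= ss + eta / 2) by (pose proof (Rmin_l (ss + eta / 2) t1); unfold s' in Hu; lra).
        pose proof (cond_pos eta); change (Rabs (u - ss) < eta); apply Rabs_lt_between; lra. }
      specialize (Heta u Hball); simpl in Heta; apply Rabs_lt_between in Heta; lra. }
    pose proof (Hub s' H); lra. }
  intros u Hu; destruct (Rlt_le_dec u ss); [apply Hbelow; lra|].
  replace u with ss by lra; exact Hss_lt.
Qed.

Lemma exp_decay_of_local_dissipation (phi phi' n : R -> R) sig m rho :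
  0 <= sig -> 0 < m ->
  (forall t, 0 <= t -> is_derive phi t (phi' t)) ->
  (forall t, 0 <= t -> 0 <= n t) ->
  (forall t, 0 <= t -> m * n t <= phi t) ->
  (forall t, 0 <= t -> n t < rho -> phi' t <= - sig * phi t) ->
  phi 0 < m * rho ->
  forall t, 0 <= t -> phi t * exp (sig * t) <= phi 0.
Proof.
  intros Hsig Hm Hd Hn Hmn Hdiss H0 t Ht.
  assert (Hdiss' : forall u, 0 <= u -> phi u < m * rho -> phi' u <= - sig * phi u).
  { intros u Hu Hphi; apply Hdiss; [exact Hu|].
    apply (Rmult_lt_reg_l m); [exact Hm|]; pose proof (Hmn u Hu); lra. }
  assert (Htrapped : forall u, 0 <= u <= t -> phi u < m * rho).
  { apply continuous_barrier; [exact Ht | |].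
    - intros u Hu; apply derivable_continuous_pt; exists (phi' u); apply is_derive_Reals, Hd; lra.
    - intros s Hs Hbelow.
      assert (Hdec : phi s * exp (sig * s) <= phi 0).
      { apply (exp_decay_on_segment phi phi'); [lra | intros; apply Hd; lra |].
        intros u Hu; apply Hdiss'; [lra | apply Hbelow; lra]. }
      assert (0 <= sig * s) by (apply Rmult_le_pos; lra).
      assert (1 <= exp (sig * s)) by (pose proof (exp_ineq1_le (sig * s)); lra).
      assert (0 <= phi s).
      { pose proof (Hmn s ltac:(lra)).
        pose proof (Rmult_le_pos m (n s) ltac:(lra) (Hn s ltac:(lra))); lra. }
      assert (phi s <= phi s * exp (sig * s)).
      { rewrite <- (Rmult_1_r (phi s)) at 1; apply Rmult_le_compat_l; lra. }
      lra. }
  apply (exp_decay_on_segment phi phi'); [exact Ht | intros; apply Hd; lra |].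
  intros u Hu; apply Hdiss'; [lra | apply Htrapped; lra].
Qed.

Lemma lyap_form_bound_pos M : routh_hurwitz4 M -> 0 < quad_form_bound (lyap_form M).
Proof.
  intros HM; set (e := Vec4 1 0 0 0).
  pose proof (lyap_form_ge M e HM); pose proof (quad_form_le_bound _ e (lyap_form_nonneg M HM)).
  pose proof (lyap_coercivity_pos M HM).
  assert (sqnorm e = 1) by (unfold sqnorm, e; simpl; ring).
  nra.
Qed.

Lemma lyap_form_local_dissipation J s D rho x rem :
  0 < s -> routh_hurwitz4 (mx_shift J s) -> 0 <= D ->
  let L := lyap_form (mx_shift J s) in
  2 * quad_form_bound L * D * rho <= s ^ 2 * lyap_coercivity (mx_shift J s) ->
  sqnorm x < rho -> sqnorm rem <= D * sqnorm x ^ 2 ->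
  2 * bilin_form L x (vadd (mxv J x) rem) <= - (s / 2) * quad_form L x.
Proof.
  intros Hs HM HD L Hrho Hx Hrem.
  set (K := quad_form_bound L) in *; set (m := lyap_coercivity (mx_shift J s)) in *.
  pose proof (lyap_form_dissipation J s x rem Hs HM) as Hdis; cbv zeta in Hdis; fold L in Hdis.
  pose proof (quad_form_le_bound L rem (lyap_form_nonneg _ HM)) as HWrem; fold K in HWrem.
  pose proof (lyap_form_ge _ x HM) as HWx; fold L m in HWx.
  pose proof (lyap_form_bound_pos _ HM) as HK; fold L K in HK.
  pose proof (sqnorm_ge0 x); pose proof (pow2_ge_0 s).
  assert (HWsmall : quad_form L rem <= s ^ 2 / 2 * quad_form L x).
  { assert (K * sqnorm rem <= K * (D * sqnorm x ^ 2)) by (apply Rmult_le_compat_l; lra).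
    assert (sqnorm x ^ 2 <= rho * sqnorm x) by nra.
    assert (K * D * sqnorm x ^ 2 <= K * D * (rho * sqnorm x))
      by (apply Rmult_le_compat_l; [apply Rmult_le_pos|]; lra).
    assert (K * D * (rho * sqnorm x) <= s ^ 2 / 2 * (m * sqnorm x)) by nra.
    nra. }
  assert (quad_form L rem / s <= s / 2 * quad_form L x).
  { apply (Rmult_le_reg_l s); [exact Hs|].
    replace (s * (quad_form L rem / s)) with (quad_form L rem) by (field; lra).
    replace (s * (s / 2 * quad_form L x)) with (s ^ 2 / 2 * quad_form L x) by field.
    exact HWsmall. }
  lra.
Qed.

Lemma local_exp_decay J s D delta :
  0 < s -> routh_hurwitz4 (mx_shift J s) -> 0 < delta -> 0 <= D ->
  exists m K rho, 0 < m /\ 0 < K /\ 0 < rho /\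
  forall e e' : R -> vec4,
    (forall t, 0 <= t -> is_derive4 e t (e' t)) ->
    (forall t, 0 <= t -> sqnorm (e t) < delta ->
       exists rem, e' t = vadd (mxv J (e t)) rem /\ sqnorm rem <= D * sqnorm (e t) ^ 2) ->
    K * sqnorm (e 0) < m * rho ->
    forall t, 0 <= t -> m * sqnorm (e t) * exp (s / 2 * t) <= K * sqnorm (e 0).
Proof.
  intros Hs HM Hdelta HD.
  set (L := lyap_form (mx_shift J s)); set (m := lyap_coercivity (mx_shift J s)).
  set (K := quad_form_bound L); set (rho := Rmin delta (s ^ 2 * m / (2 * K * D + 1))).
  assert (Hm : 0 < m) by exact (lyap_coercivity_pos _ HM).
  assert (HK : 0 < K) by exact (lyap_form_bound_pos _ HM).
  assert (HKD : 0 <= K * D) by (apply Rmult_le_pos; lra).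
  assert (Hrho : 0 < rho).
  { apply Rmin_pos; [exact Hdelta|].
    apply Rdiv_lt_0_compat; [apply Rmult_lt_0_compat; [apply pow_lt|]|]; lra. }
  assert (Hrho_delta : rho <= delta) by apply Rmin_l.
  assert (Hrho_small : 2 * K * D * rho <= s ^ 2 * m).
  { assert (rho * (2 * K * D + 1) <= s ^ 2 * m).
    { apply (Rmult_le_reg_r (/ (2 * K * D + 1))); [apply Rinv_0_lt_compat; lra|].
      rewrite Rmult_assoc, Rinv_r, Rmult_1_r by lra; apply Rmin_r. }
    nra. }
  exists m, K, rho; split; [exact Hm | split; [exact HK | split; [exact Hrho|]]].
  intros e e' Hd Hrem H0 t Ht.
  assert (Hlow : forall u, 0 <= u -> m * sqnorm (e u) <= quad_form L (e u))
    by (intros; apply lyap_form_ge, HM).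
  assert (Hdiss : forall u, 0 <= u -> sqnorm (e u) < rho ->
            2 * bilin_form L (e u) (e' u) <= - (s / 2) * quad_form L (e u)).
  { intros u Hu Hsmall.
    destruct (Hrem u Hu ltac:(lra)) as [rem [-> Hr]].
    exact (lyap_form_local_dissipation J s D rho (e u) rem Hs HM HD Hrho_small Hsmall Hr). }
  pose proof (quad_form_le_bound L (e 0) (lyap_form_nonneg _ HM)) as HW0; fold K in HW0.
  pose proof (exp_decay_of_local_dissipation (fun u => quad_form L (e u))
    (fun u => 2 * bilin_form L (e u) (e' u)) (fun u => sqnorm (e u)) (s / 2) m rho
    ltac:(lra) Hm (fun u Hu => is_derive_quad_form L e u (e' u) (Hd u Hu))
    (fun u _ => sqnorm_ge0 (e u)) Hlow Hdiss ltac:(lra) t Ht) as Hdecay; cbv beta in Hdecay.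
  pose proof (Hlow t Ht); pose proof (exp_pos (s / 2 * t)).
  assert (m * sqnorm (e t) * exp (s / 2 * t) <= quad_form L (e t) * exp (s / 2 * t))
    by (apply Rmult_le_compat_r; lra).
  lra.
Qed.

Lemma locally_pos_of_continuity (h : R -> R) x :
  continuity_pt h x -> 0 < h x -> locally x (fun u => 0 < h u).
Proof.
  intros Hc Hp.
  destruct (proj1 (continuity_pt_locally h x) Hc (mkposreal (h x) Hp)) as [d Hd].
  exists d; intros u Hu; specialize (Hd u Hu); simpl in Hd; apply Rabs_lt_between in Hd; lra.
Qed.

Lemma routh_hurwitz4_shift J : routh_hurwitz4 J ->
  exists s, 0 < s /\ routh_hurwitz4 (mx_shift J s).
Proof.
  intros (H1 & H2 & H3 & H4).
  set (k1 := char_coef1 J) in *; set (k2 := char_coef2 J) in *;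
  set (k3 := char_coef3 J) in *; set (k4 := char_coef4 J) in *.
  set (d1 := fun s => k1 - 4 * s).
  set (d2 := fun s => k2 - 3 * k1 * s + 6 * s ^ 2).
  set (d3 := fun s => k3 - 2 * k2 * s + 3 * k1 * s ^ 2 - 4 * s ^ 3).
  set (d4 := fun s => k4 - k3 * s + k2 * s ^ 2 - k1 * s ^ 3 + s ^ 4).
  assert (Hnear : locally 0 (fun s => 0 < d1 s /\ 0 < d1 s * d2 s - d3 s /\
                     0 < d3 s * (d1 s * d2 s - d3 s) - d1 s ^ 2 * d4 s /\ 0 < d4 s)).
  { repeat apply filter_and; apply locally_pos_of_continuity;
      unfold d1, d2, d3, d4; solve [reg | simpl; nra]. }
  destruct Hnear as [eps Heps].
  exists (eps / 2); split; [pose proof (cond_pos eps); lra|].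
  destruct (char_coefs_shift J (eps / 2)) as (E1 & E2 & E3 & E4).
  unfold routh_hurwitz4; rewrite E1, E2, E3, E4.
  apply Heps; pose proof (cond_pos eps).
  change (Rabs (eps / 2 - 0) < eps); rewrite Rminus_0_r, Rabs_right; lra.
Qed.

Definition linearization_error (F : R -> R -> R) (x0 y0 h l : R) : R :=
  F (x0 + h) (y0 + l) - F x0 y0 - D1 F x0 y0 * h - D2 F x0 y0 * l.

Lemma DL_pol_1 F x y h l : DL_pol 1 F x y h l = F x y + D1 F x y * h + D2 F x y * l.
Proof.
  unfold DL_pol, differential, D1, D2; simpl; unfold partial_derive, Binomial.C; simpl; field.
Qed.

Lemma linearization_error_quadratic (F : R -> R -> R) x0 y0 : 0 < x0 -> 0 < y0 ->
  C2_quadrant F ->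
  exists C dl, 0 <= C /\ 0 < dl /\ forall h l, Rabs h < dl -> Rabs l < dl ->
    Rabs (linearization_error F x0 y0 h l) <= C * (h ^ 2 + l ^ 2).
Proof.
  intros Hx Hy HF.
  assert (Hreg : locally_2d (fun u v => ex_diff_n F 2 u v) x0 y0).
  { exists (mkposreal (Rmin x0 y0) (Rmin_pos _ _ Hx Hy)); simpl; intros u v Hu Hv.
    apply Rabs_lt_between in Hu, Hv; pose proof (Rmin_l x0 y0); pose proof (Rmin_r x0 y0).
    destruct (HF u v ltac:(lra) ltac:(lra)) as (? & ? & ? & ? & ? & ? & ? & ? & ? & ? & ? & ? & ?).
    simpl; tauto. }
  destruct (Taylor_Lagrange_2d F 1 x0 y0 Hreg) as [C [dl Hdl]].
  exists (Rabs C), dl; split; [apply Rabs_pos | split; [apply cond_pos|]].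
  intros h l Hh Hl.
  specialize (Hdl (x0 + h) (y0 + l)); rewrite DL_pol_1 in Hdl.
  replace (x0 + h - x0) with h in Hdl by ring; replace (y0 + l - y0) with l in Hdl by ring.
  unfold linearization_error.
  replace (F (x0 + h) (y0 + l) - F x0 y0 - D1 F x0 y0 * h - D2 F x0 y0 * l)
    with (F (x0 + h) (y0 + l) - (F x0 y0 + D1 F x0 y0 * h + D2 F x0 y0 * l)) by ring.
  eapply Rle_trans; [apply Hdl; assumption|].
  assert (Rmax (Rabs h) (Rabs l) ^ 2 <= h ^ 2 + l ^ 2).
  { apply Rmax_case; rewrite pow2_abs; pose proof (pow2_ge_0 h); pose proof (pow2_ge_0 l); lra. }
  pose proof (Rle_abs C); pose proof (Rabs_pos C); pose proof (pow2_ge_0 (Rmax (Rabs h) (Rabs l))).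
  simpl in *; nra.
Qed.

Lemma D1_incidence F f S I : incidence_hyp F f -> 0 < S -> 0 < I -> D1 F S I = I * D1 f S I.
Proof.
  intros (Hprod & _) HS HI; unfold D1.
  rewrite (Derive_ext_loc (fun u => F u I) (fun u => I * f u I)); [apply Derive_scal|].
  apply (filter_imp (fun u => 0 < u)); [intros u Hu; apply Hprod; lra|].
  apply locally_pos_of_continuity; [apply continuity_pt_id | exact HS].
Qed.

Lemma D2_incidence F f S I : incidence_hyp F f -> 0 < S -> 0 < I ->
  D2 F S I = f S I + I * D2 f S I.
Proof.
  intros (Hprod & _ & Hf & _) HS HI; unfold D2.
  rewrite (Derive_ext_loc (fun v => F S v) (fun v => id v * f S v)).
  - destruct (Hf S I ltac:(lra) ltac:(lra)) as (_ & Hfd & _).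
    rewrite Derive_mult; [| apply ex_derive_id | exact Hfd].
    rewrite Derive_id; unfold id; change (fun v : R => f S v) with (f S); ring.
  - apply (filter_imp (fun v => 0 < v)); [intros v Hv; apply Hprod; lra|].
    apply locally_pos_of_continuity; [apply continuity_pt_id | exact HI].
Qed.

Definition model_field Lam mu r k g1 g2 v1 v2 (F1 F2 : R -> R -> R) (y : vec4) : vec4 :=
  Vec4 (rhsS Lam mu r F1 F2 (comp0 y) (comp2 y) (comp3 y))
       (rhsV mu r k (comp0 y) (comp1 y) (comp3 y))
       (rhsI1 mu g1 v1 F1 (comp0 y) (comp2 y))
       (rhsI2 mu k g2 v2 F2 (comp0 y) (comp1 y) (comp3 y)).

Definition deviation (S V1 I1 I2 : R -> R) (E : vec4) (t : R) : vec4 :=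
  vsub (Vec4 (S t) (V1 t) (I1 t) (I2 t)) E.

Lemma vadd_vsub x y : vadd y (vsub x y) = x.
Proof. apply vec4_eq; unfold vadd, vsub; simpl; ring. Qed.

Lemma is_derive4_deviation Lam mu r k g1 g2 v1 v2 F1 F2 S V1 I1 I2 E t :
  is_solution Lam mu r k g1 g2 v1 v2 F1 F2 S V1 I1 I2 -> 0 <= t ->
  is_derive4 (deviation S V1 I1 I2 E) t
    (model_field Lam mu r k g1 g2 v1 v2 F1 F2 (vadd E (deviation S V1 I1 I2 E t))).
Proof.
  intros Hsol Ht; unfold deviation at 2; rewrite vadd_vsub.
  assert (Hshift : forall (f : R -> R) (c l : R),
            is_derive f t l -> is_derive (fun s => f s - c) t l).
  { intros f c l Hf; apply (proj2 (is_derive_Reals _ _ _)); apply is_derive_Reals in Hf.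
    replace l with (l - 0) by ring.
    exact (derivable_pt_lim_minus f (fun _ => c) t l 0 Hf (derivable_pt_lim_const c t)). }
  destruct (Hsol t Ht) as (HS & HV & HI1 & HI2).
  unfold is_derive4, deviation, vsub, model_field; simpl.
  split; [|split; [|split]]; apply Hshift; assumption.
Qed.

Lemma is_lim_of_sq_exp_bound (x : R -> R) l A sig : 0 < sig ->
  (forall t, 0 <= t -> (x t - l) ^ 2 * exp (sig * t) <= A) -> is_lim x p_infty l.
Proof.
  intros Hsig Hb; apply is_lim_spec; intros eps; simpl.
  pose proof (cond_pos eps) as He.
  assert (Heps2 : 0 < eps ^ 2 * sig) by (apply Rmult_lt_0_compat; [apply pow_lt|]; lra).
  exists (Rmax 0 (A / (eps ^ 2 * sig))); intros t Ht.
  pose proof (Rmax_l 0 (A / (eps ^ 2 * sig))); pose proof (Rmax_r 0 (A / (eps ^ 2 * sig))).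
  assert (HA : A < eps ^ 2 * sig * t).
  { apply (Rmult_lt_reg_l (/ (eps ^ 2 * sig))); [apply Rinv_0_lt_compat; lra|].
    rewrite <- Rmult_assoc, Rinv_l, Rmult_1_l by lra.
    unfold Rdiv in *; lra. }
  specialize (Hb t ltac:(lra)); pose proof (exp_ineq1_le (sig * t)).
  rewrite <- (Rabs_right eps) by lra; apply Rsqr_lt_abs_0; unfold Rsqr.
  apply NNPP; intros Hnot.
  assert (eps ^ 2 * (1 + sig * t) <= (x t - l) ^ 2 * exp (sig * t)).
  { apply Rmult_le_compat; [apply pow2_ge_0 | nra | simpl; lra | lra]. }
  nra.
Qed.

Lemma is_lim_of_deviation_exp_bound S V1 I1 I2 Ss Vs I1s I2s A sig : 0 < sig ->
  (forall t, 0 <= t ->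
     sqnorm (deviation S V1 I1 I2 (Vec4 Ss Vs I1s I2s) t) * exp (sig * t) <= A) ->
  is_lim S p_infty Ss /\ is_lim V1 p_infty Vs /\ is_lim I1 p_infty I1s /\ is_lim I2 p_infty I2s.
Proof.
  intros Hsig Hb.
  repeat split; apply (is_lim_of_sq_exp_bound _ _ A sig Hsig); intros t Ht;
    specialize (Hb t Ht); pose proof (exp_pos (sig * t));
    unfold sqnorm, deviation, vsub in Hb; simpl in Hb;
    pose proof (pow2_ge_0 (S t - Ss)); pose proof (pow2_ge_0 (V1 t - Vs));
    pose proof (pow2_ge_0 (I1 t - I1s)); pose proof (pow2_ge_0 (I2 t - I2s)); nra.
Qed.

Lemma las_of_local_exp_decay Lam mu r k g1 g2 v1 v2 F1 F2 Ss Vs I1s I2s m K rho sig :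
  0 < m -> 0 < K -> 0 < rho -> 0 < sig ->
  (forall S V1 I1 I2, is_solution Lam mu r k g1 g2 v1 v2 F1 F2 S V1 I1 I2 ->
     let e := deviation S V1 I1 I2 (Vec4 Ss Vs I1s I2s) in
     K * sqnorm (e 0) < m * rho ->
     forall t, 0 <= t -> m * sqnorm (e t) * exp (sig * t) <= K * sqnorm (e 0)) ->
  locally_asymptotically_stable Lam mu r k g1 g2 v1 v2 F1 F2 Ss Vs I1s I2s.
Proof.
  intros Hm HK Hrho Hsig Hdecay.
  set (N := fun S V1 I1 I2 t => sqnorm (deviation S V1 I1 I2 (Vec4 Ss Vs I1s I2s) t)).
  assert (Hdist : forall S V1 I1 I2 t,
            dist4 (S t) (V1 t) (I1 t) (I2 t) Ss Vs I1s I2s = sqrt (N S V1 I1 I2 t)) by reflexivity.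
  assert (Hstart : forall S V1 I1 I2 b, 0 < b ->
            dist4 (S 0) (V1 0) (I1 0) (I2 0) Ss Vs I1s I2s < sqrt (b / K) ->
            K * N S V1 I1 I2 0 < b).
  { intros S V1 I1 I2 b Hb Hd; rewrite Hdist in Hd; apply sqrt_lt_0_alt in Hd.
    apply (Rmult_lt_compat_l K) in Hd; [|exact HK].
    replace (K * (b / K)) with b in Hd by (field; lra); exact Hd. }
  assert (Hbound : forall S V1 I1 I2, is_solution Lam mu r k g1 g2 v1 v2 F1 F2 S V1 I1 I2 ->
            K * N S V1 I1 I2 0 < m * rho ->
            forall t, 0 <= t -> N S V1 I1 I2 t * exp (sig * t) <= K * N S V1 I1 I2 0 / m).
  { intros S V1 I1 I2 Hsol H0 t Ht; specialize (Hdecay S V1 I1 I2 Hsol H0 t Ht).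
    apply (Rmult_le_reg_l m); [exact Hm|].
    replace (m * (K * N S V1 I1 I2 0 / m)) with (K * N S V1 I1 I2 0) by (field; lra).
    unfold N; lra. }
  split.
  - intros eps Heps.
    set (b := Rmin (m * rho) (m * eps ^ 2)).
    assert (Hb : 0 < b) by (apply Rmin_pos; apply Rmult_lt_0_compat; try apply pow_lt; lra).
    exists (sqrt (b / K)); split; [apply sqrt_lt_R0, Rdiv_lt_0_compat; lra|].
    intros S V1 I1 I2 Hsol _ _ _ _ H0 t Ht.
    specialize (Hstart S V1 I1 I2 b Hb H0).
    assert (b <= m * rho) by apply Rmin_l; assert (b <= m * eps ^ 2) by apply Rmin_r.
    specialize (Hbound S V1 I1 I2 Hsol ltac:(lra) t Ht).
    assert (HN : 0 <= N S V1 I1 I2 t) by apply sqnorm_ge0.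
    assert (1 <= exp (sig * t)) by (pose proof (exp_ineq1_le (sig * t)); nra).
    assert (K * N S V1 I1 I2 0 / m < eps ^ 2).
    { apply (Rmult_lt_reg_l m); [exact Hm|].
      replace (m * (K * N S V1 I1 I2 0 / m)) with (K * N S V1 I1 I2 0) by (field; lra); lra. }
    rewrite Hdist, <- (sqrt_pow2 eps) by lra; apply sqrt_lt_1_alt; split; [exact HN | nra].
  - assert (Hmrho : 0 < m * rho) by (apply Rmult_lt_0_compat; lra).
    exists (sqrt (m * rho / K)); split; [apply sqrt_lt_R0, Rdiv_lt_0_compat; lra|].
    intros S V1 I1 I2 Hsol _ _ _ _ H0.
    exact (is_lim_of_deviation_exp_bound S V1 I1 I2 Ss Vs I1s I2s _ sig Hsig
             (Hbound S V1 I1 I2 Hsol (Hstart S V1 I1 I2 _ Hmrho H0))).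
Qed.

Definition model_jacobian mu r k g1 g2 v1 v2 (F1 F2 : R -> R -> R) Ss Vs I1s I2s : mat4 :=
  Mat4 (- D1 F1 Ss I1s - D1 F2 Ss I2s - (r + mu)) 0 (- D2 F1 Ss I1s) (- D2 F2 Ss I2s)
       r (- mu - k * I2s) 0 (- k * Vs)
       (D1 F1 Ss I1s) 0 (D2 F1 Ss I1s - (g1 + v1 + mu)) 0
       (D1 F2 Ss I2s) (k * I2s) 0 (D2 F2 Ss I2s + k * Vs - (g2 + v2 + mu)).

Definition model_remainder k (F1 F2 : R -> R -> R) Ss I1s I2s (x : vec4) : vec4 :=
  let e1 := linearization_error F1 Ss I1s (comp0 x) (comp2 x) in
  let e2 := linearization_error F2 Ss I2s (comp0 x) (comp3 x) in
  Vec4 (- e1 - e2) (- k * comp3 x * comp1 x) e1 (e2 + k * comp3 x * comp1 x).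

Lemma sqnorm_le_of_comps x b :
  Rabs (comp0 x) <= b -> Rabs (comp1 x) <= b -> Rabs (comp2 x) <= b -> Rabs (comp3 x) <= b ->
  sqnorm x <= 4 * b ^ 2.
Proof.
  intros H0 H1 H2 H3; unfold sqnorm.
  rewrite <- (pow2_abs (comp0 x)), <- (pow2_abs (comp1 x)), <- (pow2_abs (comp2 x)),
    <- (pow2_abs (comp3 x)).
  pose proof (Rabs_pos (comp0 x)); pose proof (Rabs_pos (comp1 x));
  pose proof (Rabs_pos (comp2 x)); pose proof (Rabs_pos (comp3 x)).
  simpl; nra.
Qed.

Lemma Rabs_comps_lt_of_sqnorm x d : 0 < d -> sqnorm x < d ^ 2 ->
  Rabs (comp0 x) < d /\ Rabs (comp1 x) < d /\ Rabs (comp2 x) < d /\ Rabs (comp3 x) < d.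
Proof.
  intros Hd Hx; unfold sqnorm in Hx.
  pose proof (pow2_ge_0 (comp0 x)); pose proof (pow2_ge_0 (comp1 x));
  pose proof (pow2_ge_0 (comp2 x)); pose proof (pow2_ge_0 (comp3 x)).
  repeat split; rewrite <- (Rabs_right d) by lra; apply Rsqr_lt_abs_0; unfold Rsqr; simpl in *; lra.
Qed.

Section EndemicEquilibrium.

Variables (Lam mu r k g1 g2 v1 v2 : R) (F1 f1 F2 f2 : R -> R -> R) (Ss Vs I1s I2s : R).
Hypotheses (Hmu : mu > 0) (Hr : r > 0) (Hk : k > 0) (Hg1 : g1 > 0) (Hv1 : v1 >= 0).
Hypotheses (HF1 : incidence_hyp F1 f1) (HF2 : incidence_hyp F2 f2).
Hypotheses (HSs : Ss > 0) (HVs : Vs > 0) (HI1s : I1s > 0) (HI2s : I2s > 0).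
Hypotheses (EqS : rhsS Lam mu r F1 F2 Ss I1s I2s = 0) (EqV : rhsV mu r k Ss Vs I2s = 0)
  (EqI1 : rhsI1 mu g1 v1 F1 Ss I1s = 0) (EqI2 : rhsI2 mu k g2 v2 F2 Ss Vs I2s = 0).

Let J := model_jacobian mu r k g1 g2 v1 v2 F1 F2 Ss Vs I1s I2s.

Lemma equilibrium_f1 : f1 Ss I1s = g1 + v1 + mu.
Proof.
  destruct HF1 as (Hprod & _); unfold rhsI1 in EqI1; rewrite Hprod in EqI1 by lra.
  apply (Rmult_eq_reg_l I1s); lra.
Qed.

Lemma equilibrium_f2 : f2 Ss I2s = g2 + v2 + mu - k * Vs.
Proof.
  destruct HF2 as (Hprod & _); unfold rhsI2 in EqI2; rewrite Hprod in EqI2 by lra.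
  apply (Rmult_eq_reg_l I2s); lra.
Qed.

Lemma jacobian_char_coef1_pos : 0 < char_coef1 J.
Proof.
  destruct HF1 as (_ & _ & _ & _ & _ & _ & Hslope1 & _).
  destruct HF2 as (_ & _ & _ & _ & _ & _ & Hslope2 & _).
  destruct (Hslope1 Ss I1s ltac:(lra) ltac:(lra)) as [Hx1 Hy1].
  destruct (Hslope2 Ss I2s ltac:(lra) ltac:(lra)) as [Hx2 Hy2].
  unfold J, model_jacobian, char_coef1; simpl.
  rewrite (D1_incidence F1 f1), (D1_incidence F2 f2), (D2_incidence F1 f1), (D2_incidence F2 f2),
    equilibrium_f1, equilibrium_f2 by (assumption || lra).
  assert (0 < I1s * D1 f1 Ss I1s) by (apply Rmult_lt_0_compat; lra).
  assert (0 < I2s * D1 f2 Ss I2s) by (apply Rmult_lt_0_compat; lra).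
  assert (I1s * D2 f1 Ss I1s <= 0) by nra; assert (I2s * D2 f2 Ss I2s <= 0) by nra.
  assert (0 < k * I2s) by (apply Rmult_lt_0_compat; lra).
  lra.
Qed.

(* In terms of [p = - I1s * D2 f1 >= 0], [q = - I2s * D2 f2 >= 0] and [fa = f2 Ss I2s >= 0]
   (by (H2) and the equilibrium equations), [char_coef4 J] is a sum of nonnegative terms,
   one of them positive. *)
Lemma jacobian_char_coef4_pos : 0 < char_coef4 J.
Proof.
  destruct HF1 as (_ & _ & _ & _ & _ & _ & Hslope1 & _).
  destruct HF2 as (_ & _ & _ & Hnonneg2 & _ & _ & Hslope2 & _).
  destruct (Hslope1 Ss I1s ltac:(lra) ltac:(lra)) as [Hx1 Hy1].
  destruct (Hslope2 Ss I2s ltac:(lra) ltac:(lra)) as [Hx2 Hy2].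
  assert (Hfa : 0 <= g2 + v2 + mu - k * Vs)
    by (rewrite <- equilibrium_f2; apply (Hnonneg2 Ss I2s); lra).
  set (a1 := g1 + v1 + mu); set (fa := g2 + v2 + mu - k * Vs) in *.
  set (p := - (I1s * D2 f1 Ss I1s)); set (q := - (I2s * D2 f2 Ss I2s)).
  set (A := I1s * D1 f1 Ss I1s); set (B := I2s * D1 f2 Ss I2s).
  assert (Hp : 0 <= p) by (unfold p; nra); assert (Hq : 0 <= q) by (unfold q; nra).
  assert (HA : 0 < A) by (apply Rmult_lt_0_compat; lra).
  assert (HB : 0 < B) by (apply Rmult_lt_0_compat; lra).
  assert (Hkl : 0 < k * I2s) by (apply Rmult_lt_0_compat; lra).
  assert (E : char_coef4 J = p * q * (mu * (r + mu) + mu * k * I2s)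
       + (r * k * I2s * p + B * (mu + k * I2s) * p) * fa
       + k ^ 2 * I2s * Vs * (A * a1 + p * (B + (r + mu)))
       + q * A * (mu + k * I2s) * a1).
  { unfold J, model_jacobian, char_coef4, minor3, minor2; simpl.
    rewrite (D1_incidence F1 f1), (D1_incidence F2 f2), (D2_incidence F1 f1),
      (D2_incidence F2 f2), equilibrium_f1, equilibrium_f2 by (assumption || lra).
    unfold p, q, A, B, fa, a1; ring. }
  rewrite E.
  assert (0 <= p * q * (mu * (r + mu) + mu * k * I2s)) by
    (apply Rmult_le_pos; [apply Rmult_le_pos | nra]; lra).
  assert (0 <= (r * k * I2s * p + B * (mu + k * I2s) * p) * fa) by
    (apply Rmult_le_pos; [|lra]; apply Rplus_le_le_0_compat;
     repeat apply Rmult_le_pos; lra).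
  assert (0 < k ^ 2 * I2s * Vs * (A * a1 + p * (B + (r + mu)))).
  { apply Rmult_lt_0_compat; [repeat apply Rmult_lt_0_compat; try apply pow_lt; lra|].
    assert (0 < A * a1) by (apply Rmult_lt_0_compat; unfold a1; lra).
    assert (0 <= p * (B + (r + mu))) by (apply Rmult_le_pos; lra); lra. }
  assert (0 <= q * A * (mu + k * I2s) * a1) by (repeat apply Rmult_le_pos; unfold a1; lra).
  lra.
Qed.

Lemma model_field_decomposition x :
  model_field Lam mu r k g1 g2 v1 v2 F1 F2 (vadd (Vec4 Ss Vs I1s I2s) x)
  = vadd (mxv J x) (model_remainder k F1 F2 Ss I1s I2s x).
Proof.
  unfold rhsS, rhsV in EqS, EqV.
  apply vec4_eq; unfold model_field, model_remainder, linearization_error, J, model_jacobian,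
    vadd, mxv, rhsS, rhsV, rhsI1, rhsI2 in *; simpl; lra.
Qed.

Lemma model_remainder_quadratic : exists D delta, 0 <= D /\ 0 < delta /\
  forall x, sqnorm x < delta ->
    sqnorm (model_remainder k F1 F2 Ss I1s I2s x) <= D * sqnorm x ^ 2.
Proof.
  destruct HF1 as (_ & HC1 & _); destruct HF2 as (_ & HC2 & _).
  destruct (linearization_error_quadratic F1 Ss I1s HSs HI1s HC1) as (C1 & d1 & HC1p & Hd1 & T1).
  destruct (linearization_error_quadratic F2 Ss I2s HSs HI2s HC2) as (C2 & d2 & HC2p & Hd2 & T2).
  set (d := Rmin d1 d2).
  assert (Hd : 0 < d) by (apply Rmin_pos; assumption).
  exists (4 * (C1 + C2 + k) ^ 2), (d ^ 2); split; [nra | split; [apply pow_lt, Hd|]].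
  intros x Hx; set (N := sqnorm x).
  destruct (Rabs_comps_lt_of_sqnorm x d Hd Hx) as (B0 & B1 & B2 & B3).
  assert (d <= d1) by apply Rmin_l; assert (d <= d2) by apply Rmin_r.
  specialize (T1 (comp0 x) (comp2 x) ltac:(lra) ltac:(lra)).
  specialize (T2 (comp0 x) (comp3 x) ltac:(lra) ltac:(lra)).
  pose proof (pow2_ge_0 (comp0 x)); pose proof (pow2_ge_0 (comp1 x));
  pose proof (pow2_ge_0 (comp2 x)); pose proof (pow2_ge_0 (comp3 x)).
  assert (HN : comp0 x ^ 2 + comp1 x ^ 2 + comp2 x ^ 2 + comp3 x ^ 2 = N) by reflexivity.
  assert (R1 : Rabs (linearization_error F1 Ss I1s (comp0 x) (comp2 x)) <= C1 * N) by nra.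
  assert (R2 : Rabs (linearization_error F2 Ss I2s (comp0 x) (comp3 x)) <= C2 * N) by nra.
  assert (R3 : Rabs (k * comp3 x * comp1 x) <= k * N).
  { rewrite !Rabs_mult, (Rabs_right k) by lra.
    rewrite <- (pow2_abs (comp3 x)), <- (pow2_abs (comp1 x)) in HN.
    pose proof (Rabs_pos (comp1 x)); pose proof (Rabs_pos (comp3 x)).
    pose proof (pow2_ge_0 (Rabs (comp3 x) - Rabs (comp1 x))); nra. }
  replace (4 * (C1 + C2 + k) ^ 2 * N ^ 2) with (4 * ((C1 + C2 + k) * N) ^ 2) by ring.
  assert (0 <= N) by apply sqnorm_ge0.
  apply sqnorm_le_of_comps; unfold model_remainder;
    simpl comp0; simpl comp1; simpl comp2; simpl comp3.
  - unfold Rminus; eapply Rle_trans; [apply Rabs_triang|]; rewrite !Rabs_Ropp.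
    pose proof (Rabs_pos (linearization_error F2 Ss I2s (comp0 x) (comp3 x))); nra.
  - replace (- k * comp3 x * comp1 x) with (- (k * comp3 x * comp1 x)) by ring.
    rewrite Rabs_Ropp; nra.
  - nra.
  - eapply Rle_trans; [apply Rabs_triang|]; nra.
Qed.

Lemma las_of_shifted_jacobian s : 0 < s -> routh_hurwitz4 (mx_shift J s) ->
  locally_asymptotically_stable Lam mu r k g1 g2 v1 v2 F1 F2 Ss Vs I1s I2s.
Proof.
  intros Hs HJs.
  destruct model_remainder_quadratic as (D & delta & HD & Hdelta & Hrem).
  destruct (local_exp_decay J s D delta Hs HJs Hdelta HD)
    as (m & K & rho & Hm & HK & Hrho & Hdecay).
  apply (las_of_local_exp_decay _ _ _ _ _ _ _ _ _ _ _ _ _ _ m K rho (s / 2) Hm HK Hrho ltac:(lra)).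
  intros S V1 I1 I2 Hsol e.
  apply (Hdecay e (fun t =>
    model_field Lam mu r k g1 g2 v1 v2 F1 F2 (vadd (Vec4 Ss Vs I1s I2s) (e t)))).
  - intros t Ht; apply is_derive4_deviation; assumption.
  - intros t _ Ht; exists (model_remainder k F1 F2 Ss I1s I2s (e t)).
    split; [apply model_field_decomposition | apply Hrem, Ht].
Qed.

End EndemicEquilibrium.

Theorem mainTheorem11
  (Lam mu r k g1 g2 v1 v2 : R) (F1 f1 F2 f2 : R -> R -> R)
  (Ss Vs I1s I2s : R) :
  Lam > 0 -> mu > 0 -> r > 0 -> k > 0 -> g1 > 0 -> g2 > 0 ->
  v1 >= 0 -> v2 >= 0 ->
  incidence_hyp F1 f1 -> incidence_hyp F2 f2 ->
  Ss > 0 -> Vs > 0 -> I1s > 0 -> I2s > 0 ->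
  rhsS Lam mu r F1 F2 Ss I1s I2s = 0 ->
  rhsV mu r k Ss Vs I2s = 0 ->
  rhsI1 mu g1 v1 F1 Ss I1s = 0 ->
  rhsI2 mu k g2 v2 F2 Ss Vs I2s = 0 ->
  let lam := r + mu in
  let a1 := g1 + v1 + mu in
  let a2 := g2 + v2 + mu in
  let C11 := - D1 F1 Ss I1s - D1 F2 Ss I2s - lam in
  let C13 := - D2 F1 Ss I1s in
  let C14 := - D2 F2 Ss I2s in
  let C22 := - mu - k * I2s in
  let C24 := - k * Vs in
  let C31 := D1 F1 Ss I1s in
  let C33 := D2 F1 Ss I1s - a1 in
  let C41 := D1 F2 Ss I2s in
  let C42 := k * I2s in
  let C44 := D2 F2 Ss I2s + k * Vs - a2 in
  let c1 := - C44 - C33 - C22 - C11 in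
  let c2 := - C41 * C14 - C42 * C24 + C44 * C33 + C44 * C22 + C44 * C11
            - C31 * C13 + C33 * C22 + C33 * C11 + C22 * C11 in
  let c3 := - r * C42 * C14 + C41 * C14 * C33 + C41 * C14 * C22
            + C42 * C24 * C33 + C42 * C24 * C11 + C44 * C31 * C13
            - C44 * C33 * C22 - C44 * C33 * C11 - C44 * C22 * C11
            + C31 * C13 * C22 - C33 * C22 * C11 in
  let c4 := r * C42 * C14 * C33 - C41 * C14 * C33 * C22
            + C42 * C24 * C31 * C13 - C42 * C24 * C33 * C11
            - C44 * C31 * C13 * C22 + C44 * C33 * C22 * C11 in
  c1 * c2 - c3 > 0 ->
  c1 * c2 * c3 - c3 ^ 2 - c1 ^ 2 * c4 > 0 ->
  locally_asymptotically_stable Lam mu r k g1 g2 v1 v2 F1 F2 Ss Vs I1s I2s.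
Proof.
  intros _ Hmu Hr Hk Hg1 _ Hv1 _ HF1 HF2 HSs HVs HI1s HI2s EqS EqV EqI1 EqI2
    lam a1 a2 C11 C13 C14 C22 C24 C31 C33 C41 C42 C44 c1 c2 c3 c4 Hc12 Hc123.
  set (J := model_jacobian mu r k g1 g2 v1 v2 F1 F2 Ss Vs I1s I2s).
  assert (Hcoefs : char_coef1 J = c1 /\ char_coef2 J = c2 /\
                   char_coef3 J = c3 /\ char_coef4 J = c4).
  { unfold J, model_jacobian, char_coef1, char_coef2, char_coef3, char_coef4, minor3, minor2,
      c1, c2, c3, c4, C11, C13, C14, C22, C24, C31, C33, C41, C42, C44, lam, a1, a2; simpl.
    repeat split; ring. }
  assert (HJ : routh_hurwitz4 J).
  { pose proof (jacobian_char_coef1_pos mu r k g1 g2 v1 v2 F1 f1 F2 f2 Ss Vs I1s I2s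
      Hmu Hr Hk HF1 HF2 HSs HI1s HI2s EqI1 EqI2) as Hk1.
    pose proof (jacobian_char_coef4_pos mu r k g1 g2 v1 v2 F1 f1 F2 f2 Ss Vs I1s I2s
      Hmu Hr Hk Hg1 Hv1 HF1 HF2 HSs HVs HI1s HI2s EqI1 EqI2) as Hk4.
    fold J in Hk1, Hk4; destruct Hcoefs as (E1 & E2 & E3 & E4).
    unfold routh_hurwitz4; rewrite E1, E2, E3, E4 in *; repeat split; lra. }
  destruct (routh_hurwitz4_shift J HJ) as (s & Hs & HJs).
  exact (las_of_shifted_jacobian Lam mu r k g1 g2 v1 v2 F1 f1 F2 f2 Ss Vs I1s I2s
    Hk HF1 HF2 HSs HI1s HI2s EqS EqV EqI1 EqI2 s Hs HJs).
Qed.
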